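(* Let $\lambda$ be a nonzero real number, $r$ a nonnegative integer, and $p(x)\in\mathbb{C}[x]$ of degree $n$. Let $g(t)=\frac{\lambda(e^t-1)}{e^{\lambda t}-1}$ and $f(t)=\frac{1}{\lambda}(e^{\lambda t}-1)$. Then: (a) If $r>n$, $$p(x)=\sum_{k=0}^{n}\frac{1}{k!}\sum_{j=0}^{k}(-1)^{k-j}\binom{k}{j}\big(g(t)^{r-k}p\big)(j)\;\beta^{(r)}_{k,\lambda}(x).$$ (b) If $r\le n$, $$p(x)=\sum_{k=0}^{r-1}\frac{1}{k!}\sum_{j=0}^{k}(-1)^{k-j}\binom{k}{j}\big(g(t)^{r-k}p\big)(j)\;\beta^{(r)}_{k,\lambda}(x)+\sum_{k=r}^{n}\frac{1}{k!}\sum_{j=0}^{r}(-1)^{r-j}\binom{r}{j}\big(f(t)^{k-r}p\big)(j)\;\beta^{(r)}_{k,\lambda}(x).$$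
   Context: Higher-order degenerate Bernoulli polynomials $\beta^{(r)}_{n,\lambda}(x)$ are defined by $\Big(\frac{t}{(1+\lambda t)^{1/\lambda}-1}\Big)^r(1+\lambda t)^{x/\lambda}=\sum_{n\ge0}\beta^{(r)}_{n,\lambda}(x)\frac{t^n}{n!}$. A formal power series $h(t)=\sum_{k\ge0}c_k\frac{t^k}{k!}$ acts on polynomials as the differential operator $h(t)x^m=\sum_{k=0}^m\binom{m}{k}c_kx^{m-k}$ (i.e. $t=d/dx$); $(h(t)p)(j)$ denotes the resulting polynomial evaluated at $x=j$. *)

From HB Require Import structures.
From mathcomp Require Import all_boot all_order all_algebra.
From mathcomp Require Import reals.
From mathcomp Require Export complex.

Set Implicit Arguments.
Unset Strict Implicit.
Unset Printing Implicit Defensive.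

Import Order.TTheory GRing.Theory Num.Theory.
Local Open Scope ring_scope.

(* Formal power series a(t) = \sum_n a n * t^n  (ORDINARY coefficients). *)
Definition fps (K : Type) := nat -> K.

Section FPS.
Variable K : comUnitRingType.

Definition fps_one : fps K := fun n => (n == 0)%:R.
Definition fps_sub (a b : fps K) : fps K := fun n => a n - b n.
Definition fps_scale (c : K) (a : fps K) : fps K := fun n => c * a n.
Definition fps_mul (a b : fps K) : fps K :=
  fun n => \sum_(i < n.+1) a i * b (n - i)%N.
Definition fps_pow (a : fps K) (k : nat) : fps K := iter k (fps_mul a) fps_one.
(* division by t (for series with vanishing constant term) *)
Definition fps_divt (a : fps K) : fps K := fun n => a n.+1.
Definition fps_exp (c : K) : fps K := fun n => c ^+ n / n`!%:R.
(* (1 + lam t)^a := \sum_n lam^n binom(a, n) t^n  (generalized binomial series) *)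
Definition fps_binpow (lam a : K) : fps K :=
  fun n => lam ^+ n * (\prod_(i < n) (a - i%:R)) / n`!%:R.

Fixpoint fps_inv_seq (a : fps K) (n : nat) : seq K :=
  match n with
  | 0 => [:: (a 0%N)^-1]
  | m.+1 => let s := fps_inv_seq a m in
            rcons s (- (a 0%N)^-1 *
                     \sum_(1 <= i < m.+2) a i * nth 0 s (m.+1 - i)%N)
  end.
Definition fps_inv (a : fps K) : fps K := fun n => nth 0 (fps_inv_seq a n) n.

End FPS.

(* Action of a power series h(t) = \sum_k h k t^k on polynomials, t = d/dx:
   h(t) p = \sum_k h k * p^(k); only k < size p contribute. *)
Definition fps_act (F : fieldType) (h : fps F) (p : {poly F}) : {poly F} :=
  \sum_(k < size p) h k *: p^`(k).

Section Bernoulli.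
Variable R : realType.
Local Notation C := (R[i]).
Variable lam : R.
Local Notation lamC := ((lam%:C)%C : C).

Definition bern_kernel : fps C :=
  fps_inv (fps_divt (fps_sub (fps_binpow lamC lamC^-1) (@fps_one C))).

Definition deg_exp_x : fps {poly C} :=
  fps_binpow (lamC%:P) (lamC^-1 *: 'X).

(* higher-order degenerate Bernoulli polynomials:
   (t/((1+lam t)^{1/lam}-1))^r (1+lam t)^{x/lam} = \sum_n beta r n (x) t^n/n! *)
Definition deg_bernoulli (r n : nat) : {poly C} :=
  n`!%:R *: fps_mul (fun k => (fps_pow bern_kernel r k)%:P) deg_exp_x n.

(* g(t) = lam (e^t - 1) / (e^{lam t} - 1) = [lam (e^t-1)/t] / [(e^{lam t}-1)/t] *)
Definition g_series : fps C :=
  fps_mul (fps_scale lamC (fps_divt (fps_sub (fps_exp 1) (@fps_one C))))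
          (fps_inv (fps_divt (fps_sub (fps_exp lamC) (@fps_one C)))).

Definition f_series : fps C :=
  fps_scale lamC^-1 (fps_sub (fps_exp lamC) (@fps_one C)).

End Bernoulli.

(* Let [e_k] be the coefficients of [(1 + lam t)^{x/lam} = \sum_k e_k(x) t^k].
   The operator [f(D)], [D = d/dx], is the forward difference with step [lam],
   so [f(D) e_(k+1) = e_k] and [f(D) e_0 = 0]; as [e_k(0) = [k = 0]], every
   polynomial expands as [q = \sum_k (f(D)^k q)(0) e_k].  Since [g f = e^t - 1]
   and [e^D] is the shift by [1], Vandermonde's identity shows that [g(D)]
   multiplies the generating function of the [e_k] by
   [((1 + lam t)^{1/lam} - 1) / t], the inverse of the Bernoulli kernel; hence
   [g(D)^r] maps [beta^(r)_k / k!] to [e_k].  Expanding [g(D)^r p] in the [e_k]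
   gives [p = \sum_k (g(D)^r f(D)^k p)(0) beta^(r)_k / k!], and both formulas
   follow by writing [g^r f^k] as [(e^t - 1)^k g^(r-k)] when [k < r] and as
   [(e^t - 1)^r f^(k-r)] when [k >= r], since
   [((e^D - 1)^m q)(0) = \sum_j (-1)^(m-j) C(m,j) q(j)]. *)

From mathcomp Require Import all_boot all_order all_algebra.
From mathcomp Require Import reals complex.
From mathcomp Require Import ring.

Set Implicit Arguments.
Unset Strict Implicit.
Unset Printing Implicit Defensive.

Import GRing.Theory Num.Theory.
Local Open Scope ring_scope.

Section DifferentialOperator.
Variable R : comNzRingType.
Implicit Types h q u v : {poly R}.

Definition dop h q := \sum_(k < size h) h`_k *: q^`(k).

Lemma dopE m h q : ((size h <= m) || (size q <= m))%N ->
  dop h q = \sum_(k < m) h`_k *: q^`(k).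
Proof.
pose S m := \sum_(k < m) h`_k *: q^`(k).
have widen a b : (a <= b)%N -> ((size h <= a) || (size q <= a))%N -> S a = S b.
  move=> le_ab hs; rewrite /S -(subnKC le_ab) big_split_ord /=.
  rewrite [X in _ + X]big1 ?addr0 // => i _.
  case/orP: hs => hs.
    by rewrite nth_default ?scale0r // (leq_trans hs) ?leq_addr.
  by rewrite derivn_poly0 ?scaler0 // (leq_trans hs) ?leq_addr.
move=> hs; rewrite [LHS](widen (size h) (m + size h)) ?leq_addl ?leqnn //.
by symmetry; apply: widen; rewrite ?leq_addr.
Qed.

Lemma dopDl h1 h2 q : dop (h1 + h2) q = dop h1 q + dop h2 q.
Proof.
rewrite !(@dopE (size q)) ?leqnn ?orbT // -big_split.
by apply: eq_bigr => i _; rewrite coefD scalerDl.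
Qed.

Lemma dopZl c h q : dop (c *: h) q = c *: dop h q.
Proof.
rewrite !(@dopE (size q)) ?leqnn ?orbT // scaler_sumr.
by apply: eq_bigr => i _; rewrite coefZ scalerA.
Qed.

Lemma dopMnl h k q : dop (h *+ k) q = dop h q *+ k.
Proof. by rewrite -[h *+ k]scaler_nat dopZl scaler_nat. Qed.

Lemma dop0l q : dop 0 q = 0.
Proof. by rewrite /dop size_poly0 big_ord0. Qed.

Lemma dop_suml I (s : seq I) (P : pred I) (E : I -> {poly R}) q :
  dop (\sum_(i <- s | P i) E i) q = \sum_(i <- s | P i) dop (E i) q.
Proof. exact: (big_morph (dop^~ q) (fun a b => dopDl a b q) (dop0l q)). Qed.

Lemma dopNl h q : dop (- h) q = - dop h q.
Proof. by rewrite -scaleN1r dopZl scaleN1r. Qed.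

Lemma dopBl h1 h2 q : dop (h1 - h2) q = dop h1 q - dop h2 q.
Proof. by rewrite dopDl dopNl. Qed.

Lemma dopCl c q : dop c%:P q = c *: q.
Proof. by rewrite (@dopE 1) ?size_polyC_leq1 // big_ord1 coefC. Qed.

Lemma dop1l q : dop 1 q = q.
Proof. by rewrite -polyC1 dopCl scale1r. Qed.

Lemma dopDr h u v : dop h (u + v) = dop h u + dop h v.
Proof.
rewrite /dop -big_split; apply: eq_bigr => i _.
by rewrite derivnD scalerDr.
Qed.

Lemma dopZr c h u : dop h (c *: u) = c *: dop h u.
Proof.
rewrite /dop scaler_sumr; apply: eq_bigr => i _.
by rewrite derivnZ !scalerA mulrC.
Qed.

Lemma dop0r h : dop h 0 = 0.
Proof. by rewrite /dop big1 // => i _; rewrite derivn_poly0 ?size_poly0 ?scaler0. Qed.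

Lemma dopBr h u v : dop h (u - v) = dop h u - dop h v.
Proof. by rewrite dopDr -scaleN1r dopZr scaleN1r. Qed.

Lemma dop_sumr h I (s : seq I) (P : pred I) (E : I -> {poly R}) :
  dop h (\sum_(i <- s | P i) E i) = \sum_(i <- s | P i) dop h (E i).
Proof. exact: (big_morph (dop h) (dopDr h) (dop0r h)). Qed.

Lemma dop_deriv h q : dop h q^`() = (dop h q)^`().
Proof.
rewrite /dop (big_morph _ (@derivD _) (@deriv0 _)); apply: eq_bigr => i _.
by rewrite derivZ -derivSn derivnS.
Qed.

Lemma size_derivn_leq q k : (size q^`(k) <= size q)%N.
Proof.
elim: k => [|k IH]; first by rewrite derivn0.
rewrite derivnS; apply: leq_trans IH.
have [->|nz] := eqVneq q^`(k) 0; first by rewrite deriv0.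
exact/ltnW/lt_size_deriv.
Qed.

Lemma size_dop_leq h q : (size (dop h q) <= size q)%N.
Proof.
apply: (big_ind (fun u => size u <= size q)%N); first by rewrite size_poly0.
  by move=> u v hu hv; rewrite (leq_trans (size_polyD _ _)) // geq_max hu hv.
by move=> i _; rewrite (leq_trans (size_scale_leq _ _)) ?size_derivn_leq.
Qed.

Lemma dopXMl h q : dop ('X * h) q = dop h q^`().
Proof.
rewrite (@dopE (size q).+1) ?leqnSn ?orbT // (@dopE (size q)); last first.
  by rewrite -derivn1 size_derivn_leq orbT.
rewrite big_ord_recl coefXM /= scale0r add0r; apply: eq_bigr => i _.
by rewrite coefXM /= -derivSn.
Qed.

Lemma dopM h1 h2 q : dop (h1 * h2) q = dop h1 (dop h2 q).
Proof.
elim/poly_ind: h1 h2 q => [|h c IH] h2 q; first by rewrite mul0r !dop0l.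
rewrite mulrDl -mulrA dopDl IH mul_polyC dopZl dopXMl.
by rewrite dopDl dopCl (mulrC h) dopXMl dop_deriv.
Qed.

Lemma dop_exp h k q : dop (h ^+ k) q = iter k (dop h) q.
Proof.
elim: k => [|k IH]; first by rewrite expr0 dop1l.
by rewrite exprS dopM IH.
Qed.

Lemma coef0_exp h k : (h ^+ k)`_0 = h`_0 ^+ k.
Proof.
elim: k => [|k IH]; first by rewrite !expr0 coef1.
by rewrite !exprS coef0M IH.
Qed.

End DifferentialOperator.

Section DifferentialOperatorSize.
Variable R : numDomainType.
Implicit Types h q : {poly R}.

Lemma size_deriv q : size q^`() = (size q).-1.
Proof.
have [->|nz] := eqVneq q 0; first by rewrite deriv0 size_poly0.
apply/eqP; rewrite eqn_leq -ltnS -(polySpred nz) lt_size_deriv //=.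
case hs: (size q).-1 => [|d] //; rewrite ltnNge; apply/negP.
move=> /(nth_default 0); rewrite coef_deriv => /eqP.
by rewrite mulrn_eq0 /= -hs -lead_coefE lead_coef_eq0 (negbTE nz).
Qed.

Lemma coef0_decomp h : h = (h`_0)%:P + 'X * drop_poly 1 h.
Proof.
apply/polyP => i; rewrite coefD coefXM coefC coef_drop_poly.
by case: i => [|i] /=; rewrite ?addr0 ?add0r ?addn1.
Qed.

Lemma size_dop_coef0 h q : h`_0 != 0 -> size (dop h q) = size q.
Proof.
move=> h0; have [->|nz] := eqVneq q 0; first by rewrite dop0r.
rewrite {1}(coef0_decomp h) dopDl dopCl dopXMl size_polyDl size_scale //.
by rewrite (leq_ltn_trans (size_dop_leq _ _)) // lt_size_deriv.
Qed.

Lemma size_dop_coef1 h q : h`_0 = 0 -> h`_1 != 0 -> size (dop h q) = (size q).-1.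
Proof.
move=> h0 h1; rewrite {1}(coef0_decomp h) h0 add0r dopXMl size_dop_coef0 ?size_deriv //.
by rewrite coef_drop_poly.
Qed.

End DifferentialOperatorSize.

Section Truncation.
Variable K : comUnitRingType.
Implicit Types (a b : fps K) (h q : {poly K}).

Definition fps_trunc N a : {poly K} := \poly_(i < N) a i.

Definition eqmodX N (h h' : {poly K}) := forall i, (i < N)%N -> h`_i = h'`_i.

Lemma coef_fps_trunc N a i : (i < N)%N -> (fps_trunc N a)`_i = a i.
Proof. by move=> hi; rewrite coef_poly hi. Qed.

Lemma eqmodX_sym N (h h' : {poly K}) : eqmodX N h h' -> eqmodX N h' h.
Proof. by move=> e i hi; rewrite e. Qed.

Lemma eqmodX_trans N h1 h2 h3 :
  eqmodX N h1 h2 -> eqmodX N h2 h3 -> eqmodX N h1 h3.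
Proof. by move=> e1 e2 i hi; rewrite e1 ?e2. Qed.

Lemma eqmodXZ N c (h h' : {poly K}) : eqmodX N h h' -> eqmodX N (c *: h) (c *: h').
Proof. by move=> e i hi; rewrite !coefZ e. Qed.

Lemma eqmodXM N h1 h1' h2 h2' :
  eqmodX N h1 h1' -> eqmodX N h2 h2' -> eqmodX N (h1 * h2) (h1' * h2').
Proof.
move=> e1 e2 i hi; rewrite !coefM; apply: eq_bigr => j _.
rewrite e1 ?e2 //; first exact: leq_ltn_trans (leq_subr _ _) hi.
by apply: leq_ltn_trans hi; rewrite -ltnS.
Qed.

Lemma eqmodXMl N h h1 h2 : eqmodX N h1 h2 -> eqmodX N (h * h1) (h * h2).
Proof. exact: eqmodXM. Qed.

Lemma eqmodXMr N h h1 h2 : eqmodX N h1 h2 -> eqmodX N (h1 * h) (h2 * h).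
Proof. by move/eqmodXM; apply. Qed.

Lemma eqmodX_exp N (h h' : {poly K}) k : eqmodX N h h' -> eqmodX N (h ^+ k) (h' ^+ k).
Proof.
move=> e; elim: k => [|k IH] //.
by rewrite !exprS; apply: eqmodXM.
Qed.

Lemma dop_eqmodX N (h h' : {poly K}) q :
  eqmodX N h h' -> (size q <= N)%N -> dop h q = dop h' q.
Proof.
move=> e hq; rewrite !(@dopE _ N) ?hq ?orbT //.
by apply: eq_bigr => i _; rewrite e.
Qed.

Lemma dop_fps_trunc N a q : (size q <= N)%N ->
  dop (fps_trunc N a) q = \sum_(k < N) a k *: q^`(k).
Proof.
move=> hq; rewrite (@dopE _ N) ?hq ?orbT //.
by apply: eq_bigr => i _; rewrite coef_fps_trunc.
Qed.

Lemma fps_truncM N a b :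
  eqmodX N (fps_trunc N a * fps_trunc N b) (fps_trunc N (fps_mul a b)).
Proof.
move=> i hi; rewrite coefM coef_fps_trunc //; apply: eq_bigr => j _.
rewrite !coef_fps_trunc //; first exact: leq_ltn_trans (leq_subr _ _) hi.
by apply: leq_ltn_trans hi; rewrite -ltnS.
Qed.

Lemma fps_trunc_pow N a k :
  eqmodX N (fps_trunc N a ^+ k) (fps_trunc N (fps_pow a k)).
Proof.
elim: k => [|k IH]; first by move=> i hi; rewrite expr0 coef_fps_trunc // coef1.
rewrite exprS; exact: eqmodX_trans (eqmodXMl _ IH) (fps_truncM _ _).
Qed.

Lemma fps_truncZ N c a : fps_trunc N (fps_scale c a) = c *: fps_trunc N a.
Proof.
by apply/polyP => i; rewrite coefZ !coef_poly; case: ifP; rewrite ?mulr0.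
Qed.

Lemma fps_truncB N a b :
  fps_trunc N (fps_sub a b) = fps_trunc N a - fps_trunc N b.
Proof.
by apply/polyP => i; rewrite coefB !coef_poly; case: ifP; rewrite ?subr0.
Qed.

Lemma fps_trunc1 N : (0 < N)%N -> fps_trunc N (@fps_one K) = 1.
Proof.
move=> hN; apply/polyP => i; rewrite coef1 coef_poly /fps_one.
by case: ifP => // hi; case: i hi => //; rewrite hN.
Qed.

Lemma fps_trunc_divt N a :
  a 0%N = 0 -> eqmodX N ('X * fps_trunc N (fps_divt a)) (fps_trunc N a).
Proof.
by move=> a0 [|i] hi; rewrite coefXM /= !coef_fps_trunc // ltnW.
Qed.

Lemma size_fps_inv_seq a n : size (fps_inv_seq a n) = n.+1.
Proof. by elim: n => [|n IH] //=; rewrite size_rcons IH. Qed.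

Lemma nth_fps_inv_seq a n i :
  (i <= n)%N -> nth 0 (fps_inv_seq a n) i = fps_inv a i.
Proof.
elim: n => [|n IH]; first by rewrite leqn0 => /eqP ->.
rewrite leq_eqVlt => /orP [/eqP -> //|hi].
by rewrite /= nth_rcons size_fps_inv_seq hi IH.
Qed.

Lemma fps_invS a n : fps_inv a n.+1 =
  - (a 0%N)^-1 * \sum_(i < n.+1) a i.+1 * fps_inv a (n - i)%N.
Proof.
rewrite {1}/fps_inv /= nth_rcons size_fps_inv_seq ltnn eqxx; congr (_ * _).
rewrite big_add1 /= big_mkord; apply: eq_bigr => i _.
by rewrite nth_fps_inv_seq // subSS leq_subr.
Qed.

Lemma fps_mulV a n :
  a 0%N \is a GRing.unit -> fps_mul a (fps_inv a) n = (n == 0)%:R.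
Proof.
move=> a0; case: n => [|n]; first by rewrite /fps_mul big_ord1 /fps_inv /= mulrV.
rewrite /fps_mul big_ord_recl /= subn0 fps_invS mulrA mulrN mulrV // mulN1r.
apply/eqP; rewrite addrC subr_eq0; apply/eqP; apply: eq_bigr => i _.
by rewrite /bump /= add1n subSS.
Qed.

Lemma fps_truncV N a : a 0%N \is a GRing.unit ->
  eqmodX N (fps_trunc N a * fps_trunc N (fps_inv a)) 1.
Proof.
move=> a0; apply: (eqmodX_trans (fps_truncM _ _)) => i hi.
by rewrite coef_fps_trunc // fps_mulV // coef1.
Qed.

End Truncation.

Lemma fps_act_pow (F : fieldType) N (a : fps F) j (q : {poly F}) :
  (size q <= N)%N -> fps_act (fps_pow a j) q = dop (fps_trunc N a ^+ j) q.
Proof.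
move=> hq; rewrite (dop_eqmodX (fps_trunc_pow _ _)) // dop_fps_trunc //.
rewrite /fps_act (big_ord_widen N (fun k => fps_pow a j k *: q^`(k))) //.
rewrite big_mkcond; apply: eq_bigr => k _; case: ltnP => // hk.
by rewrite derivn_poly0 ?scaler0.
Qed.

Section FallingFactorial.
Variable R : comNzRingType.

Definition falling (z : R) k := \prod_(i < k) (z - i%:R).

Lemma falling0 z : falling z 0 = 1.
Proof. by rewrite /falling big_ord0. Qed.

Lemma fallingS z k : falling z k.+1 = falling z k * (z - k%:R).
Proof. by rewrite /falling big_ord_recr. Qed.

Lemma falling_addr1S z k : falling (z + 1) k.+1 = (z + 1) * falling z k.
Proof.
rewrite /falling big_ord_recl subr0; congr (_ * _); apply: eq_bigr => i _.
by rewrite lift0 -natr1 opprD addrACA subrr addr0.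
Qed.

Lemma fallingD y a k :
  falling (y + a) k = \sum_(i < k.+1) (falling a i * falling y (k - i)) *+ 'C(k, i).
Proof.
elim: k => [|k IH]; first by rewrite big_ord1 !falling0 mulr1.
have step (i : 'I_k.+1) :
    (falling a i * falling y (k - i) *+ 'C(k, i)) * (y + a - k%:R) =
    (falling a i * falling y (k - i).+1) *+ 'C(k, i)
      + (falling a i.+1 * falling y (k - i)) *+ 'C(k, i).
  have hi : (i <= k)%N by rewrite -ltnS.
  have -> : (k%:R : R) = (k - i)%N%:R + i%:R by rewrite -natrD subnK.
  rewrite !fallingS mulrnAl -mulrnDl; congr (_ *+ _); ring.
rewrite fallingS IH big_distrl (eq_bigr _ (fun i _ => step i)) big_split /=.
rewrite [RHS]big_ord_recl subn0 bin0 falling0 mul1r mulr1n.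
rewrite [in RHS](eq_bigr (fun i : 'I_k.+1 =>
   (falling a i.+1 * falling y (k - i)) *+ 'C(k, i.+1) +
   (falling a i.+1 * falling y (k - i)) *+ 'C(k, i))); last first.
  by move=> i _; rewrite lift0 subSS binS mulrnDr.
rewrite [in RHS]big_split /= addrA; congr (_ + _).
rewrite big_ord_recl subn0 bin0 falling0 mul1r mulr1n; congr (_ + _).
rewrite big_ord_recr /= bin_small // mulr0n addr0; apply: eq_bigr => i _.
by rewrite /bump leq0n add1n subnSK.
Qed.

End FallingFactorial.

Section FallingFactorialPoly.
Variable R : comNzRingType.

Lemma falling_polyC (c : R) k : falling (c%:P) k = (falling c k)%:P.
Proof.
rewrite /falling rmorph_prod; apply: eq_bigr => i _.
by rewrite rmorphB /= rmorph_nat.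
Qed.

Lemma falling_comp (u q : {poly R}) k : falling u k \Po q = falling (u \Po q) k.
Proof.
elim: k => [|k IH]; first by rewrite !falling0 -polyC1 comp_polyC.
by rewrite !fallingS comp_polyM IH comp_polyB -!polyC_natr comp_polyC.
Qed.

Lemma size_falling_leq (u : {poly R}) k :
  (size u <= 2)%N -> (size (falling u k) <= k.+1)%N.
Proof.
move=> hu; elim: k => [|k IH]; first by rewrite falling0 size_poly1.
rewrite fallingS (leq_trans (size_polyMleq _ _)) //.
have h2 : (size (u - k%:R)%R <= 2)%N.
  rewrite (leq_trans (size_polyD _ _)) // geq_max hu size_polyN.
  by rewrite -polyC_natr (leq_trans (size_polyC_leq1 _)).
by rewrite -subn1 leq_subLR (leq_trans (leq_add IH h2)) // addSn addn2.
Qed.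

End FallingFactorialPoly.

Section Convolution.
Variables (R : nzRingType) (V : lmodType R).

Definition conv (b : nat -> R) (E : nat -> V) k := \sum_(i < k.+1) b i *: E (k - i)%N.

Lemma eq_conv b b' E k :
  (forall i, (i <= k)%N -> b i = b' i) -> conv b E k = conv b' E k.
Proof. by move=> e; apply: eq_bigr => i _; rewrite e // -ltnS. Qed.

Lemma conv1 E k : conv (fun i => (i == 0)%:R) E k = E k.
Proof.
rewrite /conv big_ord_recl scale1r subn0 big1 ?addr0 // => i _.
by rewrite scale0r.
Qed.

Lemma convA a b E k :
  conv a (conv b E) k = conv (fun m => \sum_(i < m.+1) a i * b (m - i)%N) E k.
Proof.
rewrite /conv.
transitivity (\sum_(0 <= i < k.+1) \sum_(0 <= m < k.+1)
   (if (i <= m)%N then (a i * b (m - i)%N) *: E (k - m)%N else 0)); last first.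
  rewrite exchange_big_nat big_mkord; apply: eq_bigr => m _.
  rewrite scaler_suml big_mkord.
  rewrite (big_ord_widen _ (fun i => (a i * b (m - i)%N) *: E (k - m)%N) (ltn_ord m)).
  by rewrite [in RHS]big_mkcond; apply: eq_bigr => i _ /=; rewrite ltnS.
rewrite big_mkord; apply: eq_bigr => i _.
have hi : (i <= k)%N by rewrite -ltnS.
rewrite (@big_cat_nat _ _ _ i 0 k.+1) //=; last by rewrite ltnW.
rewrite [X in _ = X + _]big_nat_cond [X in _ = X + _]big1 ?add0r; last first.
  by move=> m /andP [/andP [_ hm] _]; rewrite leqNgt hm.
rewrite (@big_addn _ _ _ 0 k.+1 i) subSn // big_mkord scaler_sumr.
apply: eq_bigr => j _; rewrite leq_addl addnK scalerA.
by rewrite addnC subnDA.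
Qed.

End Convolution.

Section Shift.
Variable F : numFieldType.
Implicit Types q h : {poly F}.

Lemma natr_fact_neq0 k : (k`!%:R : F) != 0.
Proof. by rewrite pnatr_eq0 -lt0n fact_gt0. Qed.

(* Taylor's formula. *)
Lemma dop_exp_shift N c q : (size q <= N)%N ->
  dop (fps_trunc N (fps_exp c)) q = q \Po ('X + c%:P).
Proof.
move=> hq; rewrite dop_fps_trunc // /comp_poly.
rewrite (@nderiv_taylor_wide _ N _ _ _ (mulrC _ _)) ?size_map_polyC //.
have hornerX_lift u : (u^:P).['X] = u := comp_polyXr u.
apply: eq_bigr => k _.
rewrite nderivn_map hornerX_lift nderivn_def -polyC_exp (mulrC q^`N(k)) mul_polyC.
by rewrite /fps_exp -scaler_nat scalerA divfK // natr_fact_neq0.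
Qed.

Lemma horner_iter_dop_exp1 N q j x : (size q <= N)%N ->
  (iter j (dop (fps_trunc N (fps_exp 1))) q).[x] = q.[x + j%:R].
Proof.
move=> hq; elim: j x => [|j IH] x; first by rewrite addr0.
rewrite iterS dop_exp_shift; last by rewrite -dop_exp (leq_trans (size_dop_leq _ _)).
by rewrite horner_comp hornerD hornerX hornerC IH -natr1 addrA addrAC.
Qed.

Lemma horner0_dop_exp1B N m h q : (size q <= N)%N ->
  (dop ((fps_trunc N (fps_exp 1) - 1) ^+ m * h) q).[0] =
  \sum_(j < m.+1) (-1) ^+ (m - j)%N * 'C(m, j)%:R * (dop h q).[j%:R].
Proof.
move=> hq; rewrite addrC exprDn mulr_suml dop_suml horner_sum.
apply: eq_bigr => j _.
have sign_polyC : ((-1) ^+ (m - j) : {poly F}) = ((-1) ^+ (m - j))%:P.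
  by rewrite polyC_exp polyCN polyC1.
rewrite mulrnAl dopMnl hornerMn sign_polyC -[_ * _ * h]mulrA mul_polyC dopZl hornerZ.
rewrite dopM dop_exp horner_iter_dop_exp1 ?add0r; last first.
  exact: leq_trans (size_dop_leq _ _) hq.
by rewrite -mulr_natr mulrAC.
Qed.

End Shift.

Section DegenerateExponential.
Variables (R : realType) (lam : R).
Hypothesis lam_neq0 : lam != 0.
Local Notation C := (R[i]).
Local Notation l := ((lam%:C)%C : C).
Local Notation e := (deg_exp_x lam).
Local Notation Ft N := (fps_trunc N (f_series lam)).
Implicit Types q : {poly C}.

Lemma lamC_neq0 : l != 0.
Proof. by apply: contra lam_neq0 => /eqP h; apply/eqP; exact: complexI h. Qed.

Lemma deg_exp_xE k : e k = (l ^+ k / k`!%:R) *: falling (l^-1 *: 'X) k.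
Proof.
rewrite /deg_exp_x /fps_binpow /falling -polyC_exp -(rmorph_nat (@polyC C) k`!).
by rewrite polyCV mulrAC -polyCM mul_polyC.
Qed.

Lemma deg_exp_x0 : e 0 = 1.
Proof. by rewrite deg_exp_xE falling0 expr0 fact0 divr1 scale1r. Qed.

Lemma horner0_deg_exp_x k : (e k).[0] = (k == 0)%:R.
Proof.
case: k => [|k]; first by rewrite deg_exp_x0 hornerC.
rewrite deg_exp_xE hornerZ /falling big_ord_recl hornerM !hornerE /=.
by rewrite oppr0 mulr0 mul0r.
Qed.

Lemma size_deg_exp_x k : (size (e k) <= k.+1)%N.
Proof.
rewrite deg_exp_xE (leq_trans (size_scale_leq _ _)) // size_falling_leq //.
by rewrite (leq_trans (size_scale_leq _ _)) // size_polyX.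
Qed.

Lemma deg_exp_x_shift k : e k.+1 \Po ('X + l%:P) - e k.+1 = l *: e k.
Proof.
have shift_X : (l^-1 *: 'X) \Po ('X + l%:P) = l^-1 *: 'X + 1.
  rewrite comp_polyZ comp_polyX scalerDr -[l^-1 *: _%:P]mul_polyC -polyCM.
  by rewrite mulVf ?lamC_neq0.
rewrite !deg_exp_xE comp_polyZ falling_comp shift_X falling_addr1S fallingS.
rewrite -scalerBr !scalerA.
set z := l^-1 *: 'X; set P := falling z k.
have -> : (z + 1) * P - P * (z - k%:R) = P *+ k.+1.
  by rewrite -[P *+ _]mulr_natl -natr1; ring.
rewrite -[P *+ _]scaler_nat scalerA; congr (_ *: _).
rewrite factS natrM exprS.
have := natr_fact_neq0 C k; have : (k.+1%:R : C) != 0 by rewrite pnatr_eq0.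
by move=> h1 h2; field; rewrite h2 addrC natr1 h1.
Qed.

Lemma dop_f_series N q : (0 < N)%N -> (size q <= N)%N ->
  dop (Ft N) q = l^-1 *: (q \Po ('X + l%:P) - q).
Proof.
move=> hN hq; rewrite /f_series fps_truncZ fps_truncB fps_trunc1 //.
by rewrite dopZl dopBl dop1l dop_exp_shift.
Qed.

Lemma dop_f_deg_exp_xS N k : (k.+2 <= N)%N -> dop (Ft N) (e k.+1) = e k.
Proof.
move=> hk; rewrite dop_f_series ?(leq_trans (size_deg_exp_x _)) //; last first.
  exact: leq_trans hk.
by rewrite deg_exp_x_shift scalerA mulVf ?lamC_neq0 // scale1r.
Qed.

Lemma dop_f_deg_exp_x0 N : (0 < N)%N -> dop (Ft N) (e 0) = 0.
Proof.
move=> hN; rewrite dop_f_series ?(leq_trans (size_deg_exp_x _)) //.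
by rewrite deg_exp_x0 -polyC1 comp_polyC subrr scaler0.
Qed.

Lemma iter_dop_f_deg_exp_x N m k : (k < N)%N ->
  iter m (dop (Ft N)) (e k) = if (m <= k)%N then e (k - m)%N else 0.
Proof.
move=> hk; elim: m => [|m IH]; first by rewrite subn0.
rewrite iterS IH; case: (ltngtP m k) => hmk.
- by rewrite -(subnSK hmk) dop_f_deg_exp_xS // subnSK // (leq_ltn_trans (leq_subr _ _)).
- by rewrite dop0r.
- by rewrite hmk subnn dop_f_deg_exp_x0 // (leq_ltn_trans (leq0n k)).
Qed.

Lemma coef0_f_trunc N : (0 < N)%N -> (Ft N)`_0 = 0.
Proof.
move=> hN; rewrite coef_fps_trunc // /f_series /fps_scale /fps_sub /fps_one /fps_exp /=.
by rewrite expr0 fact0 divr1 subrr mulr0.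
Qed.

Lemma coef1_f_trunc N : (1 < N)%N -> (Ft N)`_1 = 1.
Proof.
move=> hN; rewrite coef_fps_trunc // /f_series /fps_scale /fps_sub /fps_one /fps_exp /=.
by rewrite expr1 divr1 subr0 mulVf ?lamC_neq0.
Qed.

Lemma size_dop_f_exp N m q : (1 < N)%N -> size (dop (Ft N ^+ m) q) = (size q - m)%N.
Proof.
move=> hN; elim: m => [|m IH]; first by rewrite expr0 dop1l subn0.
rewrite exprS dopM size_dop_coef1 ?IH ?subnS ?coef0_f_trunc ?coef1_f_trunc
  ?oner_eq0 //.
exact: ltnW.
Qed.

(* A Newton interpolation formula: [(f(D)^m e_k)(0) = [m = k]]. *)
Lemma deg_exp_x_expansion n q : (size q <= n.+1)%N ->
  q = \sum_(k < n.+1) (dop (Ft n.+2 ^+ k) q).[0] *: e k.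
Proof.
move=> hq; set c := fun k : nat => (dop (Ft n.+2 ^+ k) q).[0].
apply/eqP; rewrite -subr_eq0; set d := q - _.
have d_coef m : (m <= n)%N -> (dop (Ft n.+2 ^+ m) d).[0] = 0.
  move=> hm; rewrite /d dopBr dop_sumr hornerD hornerN.
  rewrite [(\sum_(k < n.+1) _).[0]]horner_sum.
  rewrite (eq_bigr (fun k : 'I_n.+1 => if k == m :> nat then c k else 0)).
    by rewrite -big_mkcond big_ord1_eq ltnS hm subrr.
  move=> k _; rewrite dopZr hornerZ (dop_exp _ m) iter_dop_f_deg_exp_x; last first.
    exact: leq_trans (ltn_ord k) _.
  case: (ltngtP k m) => h; rewrite ?horner0 ?mulr0 //.
    by rewrite horner0_deg_exp_x subn_eq0 leqNgt h mulr0.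
  by rewrite h subnn horner0_deg_exp_x mulr1.
have size_d : (size d <= n.+1)%N.
  rewrite /d (leq_trans (size_polyD _ _)) // geq_max hq size_polyN /=.
  apply: (big_ind (fun u : {poly C} => size u <= n.+1)%N); first by rewrite size_poly0.
    by move=> u v hu hv; rewrite (leq_trans (size_polyD _ _)) // geq_max hu hv.
  move=> k _; rewrite (leq_trans (size_scale_leq _ _)) //.
  exact: leq_trans (size_deg_exp_x k) (ltn_ord k).
apply: contraT => nz; set s := (size d).-1.
have hs : (s <= n)%N by rewrite /s -subn1 leq_subLR add1n.
have size_s : size (dop (Ft n.+2 ^+ s) d) = 1%N.
  by rewrite size_dop_f_exp // {1}(polySpred nz) /s subSn // subnn.
have : lead_coef (dop (Ft n.+2 ^+ s) d) != 0.
  by rewrite lead_coef_eq0 -size_poly_eq0 size_s.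
by rewrite lead_coefE size_s /= -horner_coef0 d_coef // eqxx.
Qed.

End DegenerateExponential.

Section DegenerateBernoulli.
Variables (R : realType) (lam : R).
Hypothesis lam_neq0 : lam != 0.
Local Notation C := (R[i]).
Local Notation l := ((lam%:C)%C : C).
Local Notation e := (deg_exp_x lam).
Local Notation Gt N := (fps_trunc N (g_series lam)).
Local Notation Ft N := (fps_trunc N (f_series lam)).
Local Notation Et N := (fps_trunc N (fps_exp (1 : C))).
Implicit Types h p q : {poly C}.

Lemma g_times_f N : (0 < N)%N -> eqmodX N (Gt N * Ft N) (Et N - 1).
Proof.
move=> hN.
set U := fps_divt (fps_sub (fps_exp 1) (@fps_one C)).
set W := fps_divt (fps_sub (fps_exp l) (@fps_one C)).
have exp0 (c : C) : fps_sub (fps_exp c) (@fps_one C) 0%N = 0.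
  by rewrite /fps_sub /fps_exp /fps_one expr0 fact0 divr1 subrr.
have W0 : W 0%N \is a GRing.unit.
  rewrite unitfE /W /fps_divt /fps_sub /fps_exp /fps_one /=.
  by rewrite expr1 divr1 subr0 lamC_neq0.
have hG : eqmodX N (Gt N) ((l *: fps_trunc N U) * fps_trunc N (fps_inv W)).
  by rewrite -fps_truncZ; apply/eqmodX_sym/fps_truncM.
have hF : eqmodX N (Ft N) (l^-1 *: ('X * fps_trunc N W)).
  by rewrite /f_series fps_truncZ; apply/eqmodXZ/eqmodX_sym/fps_trunc_divt/exp0.
have hE : eqmodX N ('X * fps_trunc N U) (Et N - 1).
  by rewrite -(fps_trunc1 _ hN) -fps_truncB; apply/fps_trunc_divt/exp0.
have regroup (A B B1 : {poly C}) :
    (l *: A) * B1 * (l^-1 *: ('X * B)) = ('X * A) * (B * B1).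
  rewrite -scalerAl -scalerAr -scalerAl scalerA mulVf ?lamC_neq0 // scale1r.
  by rewrite mulrACA (mulrC A) (mulrC B1).
apply: eqmodX_trans (eqmodXM hG hF) _; rewrite regroup -[X in eqmodX _ _ X]mulr1.
exact: eqmodX_trans (eqmodXMl _ (fps_truncV W0)) (eqmodXMr _ hE).
Qed.

Lemma coef0_g_trunc N : (0 < N)%N -> (Gt N)`_0 = 1.
Proof.
move=> hN; rewrite coef_fps_trunc // /g_series /fps_mul big_ord1 /fps_scale.
rewrite /fps_divt /fps_sub /fps_exp /fps_one /fps_inv /= !expr1 !divr1 !subr0.
by rewrite mulr1 mulfV ?lamC_neq0.
Qed.

(* [bern_kernel lam] is [fps_inv kernel_den] by definition. *)
Definition kernel_den : fps C :=
  fps_divt (fps_sub (fps_binpow l l^-1) (@fps_one C)).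

Lemma kernel_den0 : kernel_den 0 = 1.
Proof.
rewrite /kernel_den /fps_divt /fps_sub /fps_binpow /fps_one /= big_ord1 expr1.
by rewrite subr0 divr1 subr0 mulfV ?lamC_neq0.
Qed.

(* [e^t] shifts [x] by [1], and the shift acts on the [e_k] through the
   Vandermonde identity for falling factorials. *)
Lemma dop_exp1_deg_exp_x N k : (k < N)%N ->
  dop (Et N) (e k) = conv (fps_binpow l l^-1) e k.
Proof.
move=> hk; rewrite dop_exp_shift ?(leq_trans (size_deg_exp_x _ _)) //.
rewrite deg_exp_xE comp_polyZ falling_comp comp_polyZ comp_polyX scalerDr.
rewrite -[l^-1 *: _%:P]mul_polyC -polyCM mulr1 fallingD scaler_sumr.
apply: eq_bigr => i _; rewrite deg_exp_xE falling_polyC mul_polyC scalerMnl !scalerA.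
congr (_ *: _); have hi : (i <= k)%N by rewrite -ltnS.
rewrite -[falling _ _ *+ _]mulr_natr /fps_binpow -/(falling _ _).
rewrite -(bin_fact hi) (_ : l ^+ k = l ^+ i * l ^+ (k - i)) ?natrM; last first.
  by rewrite -exprD subnKC.
have binC_neq0 : ('C(k, i)%:R : C) != 0 by rewrite pnatr_eq0 -lt0n bin_gt0.
move: binC_neq0 (natr_fact_neq0 C i) (natr_fact_neq0 C (k - i)).
move: ('C(k, i)%:R : C) (i`!%:R : C) ((k - i)`!%:R : C) (falling l^-1 i).
by move=> c u v F hc hu hv; field; rewrite hc hu hv.
Qed.

Lemma dop_g_deg_exp_x N m : (m.+2 <= N)%N -> dop (Gt N) (e m) = conv kernel_den e m.
Proof.
move=> hm; have hN : (0 < N)%N by exact: leq_trans hm.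
(* [g(D) e_m = (g f)(D) e_(m+1) = (e^D - 1) e_(m+1)] *)
rewrite -(dop_f_deg_exp_xS lam_neq0 hm) -dopM.
rewrite (dop_eqmodX (g_times_f hN)) ?(leq_trans (size_deg_exp_x _ _)) //.
rewrite dopBl dop1l dop_exp1_deg_exp_x; last exact: leq_trans hm.
rewrite /conv big_ord_recl subn0 (_ : fps_binpow l l^-1 0 = 1); last first.
  by rewrite /fps_binpow big_ord0 expr0 mulr1 divr1.
rewrite scale1r addrC addKr; apply: eq_bigr => i _.
by rewrite lift0 subSS /kernel_den /fps_divt /fps_sub /fps_one /= subr0.
Qed.

Lemma dop_g_conv N h k : (k.+2 <= N)%N ->
  dop (Gt N) (conv (fun i => h`_i) e k) =
  conv (fun i => (h * fps_trunc N kernel_den)`_i) e k.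
Proof.
move=> hk; transitivity (conv (fun i => h`_i) (conv kernel_den e) k).
  rewrite /conv dop_sumr; apply: eq_bigr => i _.
  by rewrite dopZr dop_g_deg_exp_x // (leq_trans _ hk) // !ltnS leq_subr.
rewrite convA; apply: eq_conv => m hm; rewrite coefM; apply: eq_bigr => i _.
rewrite coef_fps_trunc //; apply: leq_ltn_trans (leq_subr _ _) _.
by apply: leq_trans hk; rewrite ltnS ltnW.
Qed.

Lemma dop_g_exp_conv N j h k : (k.+2 <= N)%N ->
  dop (Gt N ^+ j) (conv (fun i => h`_i) e k) =
  conv (fun i => (h * fps_trunc N kernel_den ^+ j)`_i) e k.
Proof.
move=> hk; elim: j => [|j IH]; first by rewrite !expr0 mulr1 dop1l.
by rewrite exprS dopM IH dop_g_conv // exprSr mulrA.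
Qed.

Lemma deg_bernoulliE r k :
  deg_bernoulli lam r k = k`!%:R *: conv (fps_pow (bern_kernel lam) r) e k.
Proof.
rewrite /deg_bernoulli /fps_mul /conv; congr (_ *: _).
by apply: eq_bigr => i _; rewrite mul_polyC.
Qed.

Lemma dop_g_exp_bernoulli N r k : (k.+2 <= N)%N ->
  dop (Gt N ^+ r) (conv (fps_pow (bern_kernel lam) r) e k) = e k.
Proof.
move=> hk; have hkN : (k < N)%N by exact: leq_trans (ltnW hk).
set B := fps_trunc N (bern_kernel lam); set D := fps_trunc N kernel_den.
have trunc_conv : conv (fps_pow (bern_kernel lam) r) e k =
    conv (fun i => (B ^+ r)`_i) e k.
  apply: eq_conv => i hi; have hiN := leq_ltn_trans hi hkN.
  by rewrite fps_trunc_pow // coef_fps_trunc.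
have BD : eqmodX N (B ^+ r * D ^+ r) 1.
  rewrite -exprMn mulrC -[X in eqmodX _ _ X](expr1n _ r); apply/eqmodX_exp/fps_truncV.
  by rewrite kernel_den0 unitr1.
rewrite trunc_conv dop_g_exp_conv // -[RHS]conv1; apply: eq_conv => i hi.
by rewrite BD ?coef1 // (leq_ltn_trans hi hkN).
Qed.

(* Expand [g(D)^r p] in the basis [e_k] and pull back along [g(D)^r]. *)
Lemma bernoulli_expansion r n p : (size p <= n.+1)%N ->
  p = \sum_(0 <= k < n.+1) (dop (Gt n.+2 ^+ r * Ft n.+2 ^+ k) p).[0] *:
        conv (fps_pow (bern_kernel lam) r) e k.
Proof.
move=> hp; rewrite big_mkord.
have G0 : (Gt n.+2 ^+ r)`_0 != 0 by rewrite coef0_exp coef0_g_trunc // expr1n oner_eq0.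
apply/eqP; rewrite -subr_eq0 -size_poly_eq0 -(size_dop_coef0 _ G0) size_poly_eq0.
have hGp : (size (dop (Gt n.+2 ^+ r) p) <= n.+1)%N := leq_trans (size_dop_leq _ p) hp.
rewrite dopBr dop_sumr {1}(deg_exp_x_expansion lam_neq0 hGp).
rewrite -sumrB big1 // => k _.
rewrite dopZr dop_g_exp_bernoulli ?(mulrC (Gt _ ^+ r)) ?dopM ?subrr //.
by rewrite !ltnS -ltnS.
Qed.

Lemma scale_deg_bernoulli r k c :
  ((k`!%:R)^-1 * c) *: deg_bernoulli lam r k =
  c *: conv (fps_pow (bern_kernel lam) r) e k.
Proof. by rewrite deg_bernoulliE scalerA mulrAC mulVf ?mul1r // natr_fact_neq0. Qed.

Lemma horner0_dop_gf_lt N r k p : (0 < N)%N -> (size p <= N)%N -> (k <= r)%N ->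
  (dop (Gt N ^+ r * Ft N ^+ k) p).[0] =
  \sum_(j < k.+1) (-1) ^+ (k - j) * 'C(k, j)%:R *
     (fps_act (fps_pow (g_series lam) (r - k)) p).[j%:R].
Proof.
move=> hN hp hk; rewrite (fps_act_pow _ _ hp).
have -> : Gt N ^+ r * Ft N ^+ k = (Gt N * Ft N) ^+ k * Gt N ^+ (r - k).
  by rewrite exprMn mulrAC -exprD subnKC.
by rewrite (dop_eqmodX (eqmodXMr _ (eqmodX_exp k (g_times_f hN)))) // horner0_dop_exp1B.
Qed.

Lemma horner0_dop_gf_ge N r k p : (0 < N)%N -> (size p <= N)%N -> (r <= k)%N ->
  (dop (Gt N ^+ r * Ft N ^+ k) p).[0] =
  \sum_(j < r.+1) (-1) ^+ (r - j) * 'C(r, j)%:R *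
     (fps_act (fps_pow (f_series lam) (k - r)) p).[j%:R].
Proof.
move=> hN hp hk; rewrite (fps_act_pow _ _ hp).
have -> : Gt N ^+ r * Ft N ^+ k = (Gt N * Ft N) ^+ r * Ft N ^+ (k - r).
  by rewrite exprMn -mulrA -exprD subnKC.
by rewrite (dop_eqmodX (eqmodXMr _ (eqmodX_exp r (g_times_f hN)))) // horner0_dop_exp1B.
Qed.

End DegenerateBernoulli.

Unset Implicit Arguments.

Theorem theorem4p1 (R : realType) (lam : R) (hlam : lam != 0)
    (r n : nat) (p : {poly R[i]}) (hp : size p = n.+1) :
  ((n < r)%N ->
   p = \sum_(k < n.+1)
         ((k`!%:R)^-1 *
          \sum_(j < k.+1) (-1) ^+ (k - j)%N * 'C(k, j)%:R *
             (fps_act (fps_pow (g_series lam) (r - k)%N) p).[j%:R])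
         *: deg_bernoulli lam r k)
  /\
  ((r <= n)%N ->
   p = \sum_(k < r)
         ((k`!%:R)^-1 *
          \sum_(j < k.+1) (-1) ^+ (k - j)%N * 'C(k, j)%:R *
             (fps_act (fps_pow (g_series lam) (r - k)%N) p).[j%:R])
         *: deg_bernoulli lam r k
       + \sum_(r <= k < n.+1)
         ((k`!%:R)^-1 *
          \sum_(j < r.+1) (-1) ^+ (r - j)%N * 'C(r, j)%:R *
             (fps_act (fps_pow (f_series lam) (k - r)%N) p).[j%:R])
         *: deg_bernoulli lam r k).
Proof.
have hpN : (size p <= n.+2)%N by rewrite hp.
have E := bernoulli_expansion hlam r (eq_leq hp).
split => hr.
  rewrite {1}E big_mkord; apply: eq_bigr => k _.
  rewrite scale_deg_bernoulli (horner0_dop_gf_lt hlam) // ltnW //.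
  exact: leq_trans (ltn_ord k) hr.
rewrite {1}E (big_cat_nat (leq0n r) (leqW hr)) /= big_mkord.
congr (_ + _).
  apply: eq_bigr => k _.
  by rewrite scale_deg_bernoulli (horner0_dop_gf_lt hlam) // ltnW.
apply: eq_big_nat => k /andP [hrk _].
by rewrite scale_deg_bernoulli (horner0_dop_gf_ge hlam).
Qed.
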